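(* Let $\Theta=\{1,\ldots,M\}$ be a finite universe of $M$ elements, let $\mathbf{p}=[p_1,\ldots,p_M]$ be a probability mass function on $\Theta$, and let $\mathbf{R}=\{r_{mn}\}_{m,n=1}^M$ be a stochastic matrix (noise channel). Define $\tilde{p}_n=\sum_{m=1}^M p_m r_{mn}$ and $\tilde{\mathbf p}=[\tilde p_1,\ldots,\tilde p_M]$. Let $\mathbf{q}=[q_1,\ldots,q_M]$ be a vector of real quality values. Let $\Theta_0\subset\Theta$ be a fixed initial set. For $t=1,2,\ldots$, let $\theta_t$ be drawn from $\mathbf{p}$ and let $\hat{\theta}_t\in\Theta$ satisfy $\Pr(\hat{\theta}_t=n\mid\theta_t=m)=r_{mn}$, with the pairs $(\theta_t,\hat\theta_t)$ independent across $t$. Set $\Theta_t=\Theta_{t-1}\cup\{\hat{\theta}_t\}$ and $Q_t=\sum_{\theta\in\Theta_t}q_\theta$. For $k\ge 1$ define the $k$th-order quality-prevalence function $D^k_{\Theta_0}(\tilde{\mathbf{p}},\mathbf{q})=\sum_{\theta\notin\Theta_0}q_\theta\tilde{p}_\theta^k$. Then for every positive integer $T$, $$E[Q_T\mid\Theta_0]=Q_0-\sum_{k=1}^T(-1)^k\binom{T}{k}D^k_{\Theta_0}(\tilde{\mathbf{p}},\mathbf{q}).$$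
   Context: This models technology-aided discovery: an explorer initially knows $\Theta_0$; at each step an element is drawn according to $\mathbf p$, a supporting technology reports a noisy identification $\hat\theta_t$ with misclassification probabilities $r_{mn}$, and the explorer adds $\hat\theta_t$ to her known set. Each element $\theta$ has quality $q_\theta$, and $Q_t$ is the total quality of the known set at time $t$ (so $Q_0=\sum_{\theta\in\Theta_0}q_\theta$). *)

From HB Require Import structures.
From mathcomp Require Import all_boot all_order all_algebra.
Set Implicit Arguments. Unset Strict Implicit. Unset Printing Implicit Defensive.
Import Order.TTheory GRing.Theory Num.Theory.
Local Open Scope ring_scope.

Section Discovery.
Variables (R : realFieldType) (M : nat).

Definition is_pmf (p : 'I_M -> R) : Prop :=
  (forall m, 0 <= p m) /\ \sum_(m < M) p m = 1.

(* r is a (row-)stochastic matrix: r m n = Pr(hat theta = n | theta = m) *)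
Definition is_stochastic (r : 'I_M -> 'I_M -> R) : Prop :=
  (forall m n, 0 <= r m n) /\ (forall m, \sum_(n < M) r m n = 1).

Definition ptilde (p : 'I_M -> R) (r : 'I_M -> 'I_M -> R) (n : 'I_M) : R :=
  \sum_(m < M) p m * r m n.

Definition quality (q : 'I_M -> R) (S : {set 'I_M}) : R :=
  \sum_(th in S) q th.

Definition known_set (Theta0 : {set 'I_M}) (w : seq ('I_M * 'I_M)) : {set 'I_M} :=
  foldl (fun S x => S :|: [set x.2]) Theta0 w.

(* probability of an outcome sequence of pairs (theta_t, hat theta_t),
   independent across t, each with law Pr(theta=m, hat theta=n) = p_m r_mn *)
Definition path_prob (p : 'I_M -> R) (r : 'I_M -> 'I_M -> R)
  (w : seq ('I_M * 'I_M)) : R :=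
  \prod_(x <- w) (p x.1 * r x.1 x.2).

Definition expected_QT (p : 'I_M -> R) (r : 'I_M -> 'I_M -> R) (q : 'I_M -> R)
  (Theta0 : {set 'I_M}) (T : nat) : R :=
  \sum_(w : T.-tuple ('I_M * 'I_M))
     path_prob p r w * quality q (known_set Theta0 w).

Definition Dk (k : nat) (Theta0 : {set 'I_M}) (pt : 'I_M -> R) (q : 'I_M -> R) : R :=
  \sum_(th < M | th \notin Theta0) q th * pt th ^+ k.

End Discovery.

(** An element [theta] outside [Theta_0] is still unknown after [T] independent
    draws with probability [(1 - p~_theta)^T], since each reported
    identification has marginal law [p~]; by linearity of expectation
    [E[Q_T] = Q_0 + sum_(theta \notin Theta_0) q_theta (1 - (1 - p~_theta)^T)],
    and the binomial theorem expands [1 - (1 - p~_theta)^T]. *)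

From HB Require Import structures.
From mathcomp Require Import all_boot all_order all_algebra.
From mathcomp Require Import ring.
Import Order.TTheory GRing.Theory Num.Theory.
Local Open Scope ring_scope.

Lemma big_tuple_cons (X : finType) (V : nmodType) n (F : n.+1.-tuple X -> V) :
  \sum_(w : n.+1.-tuple X) F w =
    \sum_(x : X) \sum_(w : n.-tuple X) F (cons_tuple x w).
Proof.
rewrite pair_big /= (reindex (fun xw : X * n.-tuple X => cons_tuple xw.1 xw.2)) //=.
exists (fun w => (thead w, behead_tuple w)) => [[x w] _ | w _] /=.
  by congr pair; apply: val_inj.
by rewrite [RHS]tuple_eta; apply: val_inj.
Qed.

Lemma expr1Bn (R : comPzRingType) (x : R) n :
  (1 - x) ^+ n = 1 + \sum_(1 <= k < n.+1) (-1) ^+ k * 'C(n, k)%:R * x ^+ k.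
Proof.
rewrite exprBn big_ord_recl /= !expr0 expr1n bin0 !mul1r mulr1n big_add1 big_mkord.
congr (_ + _); apply: eq_bigr => k _.
by rewrite expr1n mulr1 -mulr_natr mulrAC.
Qed.

Section Discovery.
Variables (R : realFieldType) (M : nat).
Variables (p : 'I_M -> R) (r : 'I_M -> 'I_M -> R) (q : 'I_M -> R).

Local Notation pt := (ptilde p r).
Local Notation EQ := (expected_QT p r q).

Lemma sum_pair_ptilde (G : 'I_M -> R) :
  \sum_(x : 'I_M * 'I_M) p x.1 * r x.1 x.2 * G x.2 = \sum_n pt n * G n.
Proof.
rewrite -(pair_big xpredT xpredT (fun m n => p m * r m n * G n)) /= exchange_big.
by apply: eq_bigr => n _; rewrite /ptilde mulr_suml.
Qed.

Lemma expected_QT0 S : EQ S 0 = quality q S.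
Proof.
rewrite /expected_QT (big_pred1 [tuple]) => [|w]; last by rewrite /= [w]tuple0.
by rewrite /path_prob big_nil mul1r.
Qed.

Lemma expected_QTS S T : EQ S T.+1 = \sum_n pt n * EQ (S :|: [set n]) T.
Proof.
rewrite /expected_QT big_tuple_cons -sum_pair_ptilde; apply: eq_bigr => x _.
rewrite mulr_sumr; apply: eq_bigr => w _.
by rewrite /path_prob big_cons mulrA.
Qed.

Hypotheses (hp : is_pmf p) (hr : is_stochastic r).

Lemma sum_ptilde : \sum_n pt n = 1.
Proof.
rewrite /ptilde exchange_big /=; case: hp => _ <-; apply: eq_bigr => m _.
by rewrite -mulr_sumr; case: hr => _ ->; rewrite mulr1.
Qed.

Lemma sum_ptilde_neq (th : 'I_M) : \sum_(n | n != th) pt n = 1 - pt th.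
Proof. by rewrite -sum_ptilde [in RHS](bigD1 th) //= [pt th + _]addrC addrK. Qed.

Lemma sum_ptilde_unknown (th : 'I_M) (S : {set 'I_M}) (a : R) :
  \sum_n pt n * (1 - (th \notin S :|: [set n])%:R * a) =
    1 - (th \notin S)%:R * ((1 - pt th) * a).
Proof.
have [thS | thNS] := boolP (th \in S).
  under eq_bigr do rewrite in_setU thS /= mul0r subr0 mulr1.
  by rewrite sum_ptilde mul0r subr0.
rewrite (bigD1 th) //= in_setU set11 orbT /= mul0r subr0 mulr1.
under eq_bigr => n nth do
  rewrite in_setU in_set1 eq_sym (negbTE nth) (negbTE thNS) /= mul1r.
by rewrite -mulr_suml sum_ptilde_neq; ring.
Qed.

Lemma expected_QT_unknown S T :
  EQ S T = \sum_th q th * (1 - (th \notin S)%:R * (1 - pt th) ^+ T).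
Proof.
elim: T S => [|T IH] S.
  rewrite expected_QT0 /quality big_mkcond /=; apply: eq_bigr => th _.
  by case: (th \in S); rewrite /= expr0 (mul0r, mul1r) (subr0, subrr) (mulr1, mulr0).
rewrite expected_QTS; under eq_bigr do rewrite IH mulr_sumr.
rewrite exchange_big /=; apply: eq_bigr => th _.
under eq_bigr do rewrite mulrCA.
by rewrite -mulr_sumr sum_ptilde_unknown exprS.
Qed.

End Discovery.

Theorem proposition4p2 (R : realFieldType) (M : nat)
  (p : 'I_M -> R) (r : 'I_M -> 'I_M -> R) (q : 'I_M -> R)
  (Theta0 : {set 'I_M}) (T : nat) :
  is_pmf p -> is_stochastic r -> (0 < T)%N ->
  expected_QT p r q Theta0 T =
    quality q Theta0
    - \sum_(1 <= k < T.+1) (-1) ^+ k * ('C(T, k))%:R * Dk k Theta0 (ptilde p r) q.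
Proof.
move=> hp hr _; rewrite expected_QT_unknown // (bigID (mem Theta0)) /=.
under eq_bigr => th th0 do rewrite th0 /= mul0r subr0 mulr1.
congr (_ + _); rewrite /Dk.
under [in RHS]eq_bigr do rewrite mulr_sumr.
rewrite [in RHS]exchange_big /= -sumrN; apply: eq_bigr => th thN0.
rewrite thN0 mul1r expr1Bn opprD addNKr mulrN mulr_sumr; congr (- _).
by apply: eq_bigr => k _; ring.
Qed.
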